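(* For $n\in\{0,1,\dots\}$ and $b,s\in\{0,\dots,n\}$, the diagonal matrix $\Gamma_{n,b,s}$ satisfies $$\Gamma_{n,b,s}=\mathrm{diag}(\lambda_{n,a_1,s},\dots,\lambda_{n,a_{2^b},s}).$$ In particular, for $b\ge1$, with $\mathbf{0}_{2^{b-1}}$ the zero vector of length $2^{b-1}$, $$\Gamma_{n,b,s}=\mathrm{diag}(\lambda_{n,a_1,s},\dots,\lambda_{n,a_{2^{b-1}},s},\mathbf{0}_{2^{b-1}})+\mathrm{diag}(\mathbf{0}_{2^{b-1}},\lambda_{n,a_1+1,s},\dots,\lambda_{n,a_{2^{b-1}}+1,s}).$$
   Context: With $(n)_t=n(n-1)\cdots(n-t+1)$ (empty product $1$), $\lambda_{n,b,s}=\sum_{t=0}^b\binom bt(-2)^t\frac{(s)_t}{(n)_t}$. Let $\Gamma=\mathrm{diag}(1,-1)$ and $I_2$ the $2\times2$ identity. The $2^b\times2^b$ matrices $\Gamma_{n,b,s}$ are defined by $\Gamma_{n,0,s}=1$ and, for $b\in\{1,\dots,n\}$, $\Gamma_{n,b,s}=\frac sn(\Gamma\otimes\Gamma_{n-1,b-1,s-1})+(1-\frac sn)(I_2\otimes\Gamma_{n-1,b-1,s})$ (terms with coefficient zero are omitted). The vectors $\mathbf{a}_b$ of length $2^b$ are defined by $\mathbf{a}_1=(0,1)$ and $\mathbf{a}_b=(\mathbf{a}_{b-1},\mathbf{a}_{b-1}+\mathbf{1}_{b-1})$ for $b\ge2$, where $\mathbf{1}_{b-1}$ is the all-ones vector of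 length $2^{b-1}$ (e.g. $\mathbf{a}_2=(0,1,1,2)$, $\mathbf{a}_3=(0,1,1,2,1,2,2,3)$); $a_k$ denotes the $k$-th entry of $\mathbf{a}_b$ for any $b$ with $2^b\ge k$ (this is well defined), and $a_1=0$. *)

From HB Require Import structures.
From mathcomp Require Import all_boot all_order all_algebra.
Set Implicit Arguments. Unset Strict Implicit. Unset Printing Implicit Defensive.
Import Order.TTheory GRing.Theory Num.Theory.
Local Open Scope ring_scope.

Lemma expS2 (b : nat) : (2 ^ b + 2 ^ b = 2 ^ b.+1)%N.
Proof. by rewrite expnS mul2n addnn. Qed.

Definition lam (R : realFieldType) (n b s : nat) : R :=
  \sum_(t < b.+1) ('C(b, t))%:R * (-2) ^+ t * (s ^_ t)%:R / (n ^_ t)%:R.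

Definition kron2 (R : realFieldType) (m : nat) (A : 'M[R]_2) (B : 'M[R]_m)
  : 'M[R]_(m + m) :=
  block_mx (A 0 0 *: B) (A 0 1 *: B) (A 1 0 *: B) (A 1 1 *: B).

Definition Gam2 (R : realFieldType) : 'M[R]_2 := diag_mx (\row_(i < 2) (if i == 0 then 1 else -1)).

(* Gamma_{n,b,s}; the recursion multiplies the omitted zero-coefficient terms by 0,
   using truncated subtraction n-1, s-1 (harmless since their coefficient is 0). *)
Fixpoint Gam (R : realFieldType) (n b s : nat) : 'M[R]_(2 ^ b) :=
  match b with
  | 0 => 1%:M
  | b'.+1 => castmx (expS2 b', expS2 b')
      ((s%:R / n%:R) *: kron2 (Gam2 R) (Gam R n.-1 b' s.-1)
       + (1 - s%:R / n%:R) *: kron2 1%:M (Gam R n.-1 b' s))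
  end.

Fixpoint avec (b : nat) : 'rV[nat]_(2 ^ b) :=
  match b with
  | 0 => \row_(k < 1) 0%N
  | b'.+1 => castmx (erefl 1%N, expS2 b')
      (row_mx (avec b') (\row_(k < 2 ^ b') (avec b' 0 k).+1))
  end.

From HB Require Import structures.
From mathcomp Require Import all_boot all_order all_algebra.
From mathcomp Require Import ring.
Import Order.TTheory GRing.Theory Num.Theory.
Local Open Scope ring_scope.

(* With p = s/n, both halves of the recursion for Gamma are governed by the
   ratios r(n,s,t) = (s)_t/(n)_t, which satisfy
     p r(n-1,s-1,t) = r(n,s,t+1)   and   (1-p) r(n-1,s,t) = r(n,s,t) - r(n,s,t+1).
   Summed against C(a,t)(-2)^t (and using Pascal's rule for the second) they give
      p lam(n-1,a,s-1) + (1-p) lam(n-1,a,s) = lam(n,a,s),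
     -p lam(n-1,a,s-1) + (1-p) lam(n-1,a,s) = lam(n,a+1,s).
   Since Gamma and I_2 are diagonal, the Kronecker recursion acts entrywise on
   diagonals: the first half of the new diagonal combines old entries with
   weights (p, 1-p), the second half with (-p, 1-p), which mirrors
   a_b = (a_{b-1}, a_{b-1} + 1).  The bound b <= n keeps t <= a < n, so no
   denominator (n-1)_t vanishes; induction on b concludes. *)


Lemma sum_binomial_shift (V : nmodType) (a : nat) (g : nat -> V) :
  \sum_(t < a.+1) (g t + g t.+1) *+ 'C(a, t) = \sum_(t < a.+2) g t *+ 'C(a.+1, t).
Proof.
have shift_last : \sum_(t < a.+1) g t *+ 'C(a, t)
    = g 0%N + \sum_(t < a.+1) g t.+1 *+ 'C(a, t.+1).
  by rewrite big_ord_recl [in RHS]big_ord_recr /= bin0 bin_small // mulr0n addr0.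
under eq_bigr do rewrite mulrnDl.
rewrite big_split /= shift_last [in RHS]big_ord_recl /= bin0 mulr1n -addrA -big_split /=.
by congr (_ + _); apply: eq_bigr => t _; rewrite binS mulrnDr addrC.
Qed.

Section FallingRatio.
Variable R : realFieldType.

Definition falling_ratio (n s t : nat) : R := (s ^_ t)%:R / (n ^_ t)%:R.

Lemma falling_ratioS (m s t : nat) :
  s%:R / m.+1%:R * falling_ratio m s.-1 t = falling_ratio m.+1 s t.+1.
Proof.
rewrite /falling_ratio ffactSS; case: s => [|s]; first by rewrite !mul0r.
by rewrite ffactSS !natrM invfM; ring.
Qed.

Lemma falling_ratio_compl (m s t : nat) : (t <= m)%N ->
  (1 - s%:R / m.+1%:R) * falling_ratio m s t
  = falling_ratio m.+1 s t - falling_ratio m.+1 s t.+1.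
Proof.
move=> le_tm; rewrite /falling_ratio.
have [lt_st | le_ts] := ltnP s t.
  by rewrite (ffact_small lt_st) (ffact_small (leqW lt_st)) !mul0r mulr0 subrr.
have m_neq0 : (m ^_ t)%:R != 0 :> R by rewrite pnatr_eq0 -lt0n ffact_gt0.
have Sm_neq0 : m.+1%:R != 0 :> R by rewrite pnatr_eq0.
have Smt_neq0 : m.+1%:R - t%:R != 0 :> R.
  by rewrite -natrB ?pnatr_eq0 ?subn_eq0 -?ltnNge ?ltnS // leqW.
(* (m+1)_t (m+1-t) = (m+1)_(t+1) = (m+1) (m)_t *)
have Smt : (m.+1 ^_ t)%:R = m.+1%:R * (m ^_ t)%:R / (m.+1%:R - t%:R) :> R.
  rewrite -natrB ?(leqW le_tm) // -natrM -ffactSS ffactnSr natrM mulfK //.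
  by rewrite natrB ?(leqW le_tm).
rewrite Smt ffactSS ffactnSr !natrM natrB //; field.
by rewrite nat1r m_neq0 Sm_neq0 Smt_neq0.
Qed.

Lemma lamE (n a s : nat) :
  lam R n a s = \sum_(t < a.+1) ((-2) ^+ t * falling_ratio n s t) *+ 'C(a, t).
Proof. by apply: eq_bigr => t _; rewrite /falling_ratio -!mulrA mulr_natl. Qed.

Lemma lam_pred_scaled (m a s : nat) :
  s%:R / m.+1%:R * lam R m a s.-1
  = \sum_(t < a.+1) ((-2) ^+ t * falling_ratio m.+1 s t.+1) *+ 'C(a, t).
Proof.
rewrite lamE mulr_sumr; apply: eq_bigr => t _.
by rewrite mulrnAr mulrCA falling_ratioS.
Qed.

Lemma lam_compl_scaled (m a s : nat) : (a <= m)%N ->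
  (1 - s%:R / m.+1%:R) * lam R m a s
  = \sum_(t < a.+1)
      ((-2) ^+ t * (falling_ratio m.+1 s t - falling_ratio m.+1 s t.+1)) *+ 'C(a, t).
Proof.
move=> le_am; rewrite lamE mulr_sumr; apply: eq_bigr => t _.
by rewrite mulrnAr mulrCA falling_ratio_compl // (leq_trans _ le_am) // -ltnS.
Qed.

Lemma lam_mix (m a s : nat) : (a <= m)%N ->
  s%:R / m.+1%:R * lam R m a s.-1 + (1 - s%:R / m.+1%:R) * lam R m a s
  = lam R m.+1 a s.
Proof.
move=> le_am; rewrite lam_pred_scaled lam_compl_scaled // lamE -big_split /=.
by apply: eq_bigr => t _; rewrite -mulrnDl -mulrDr addrC subrK.
Qed.

Lemma lam_mix_succ (m a s : nat) : (a <= m)%N ->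
  - (s%:R / m.+1%:R * lam R m a s.-1) + (1 - s%:R / m.+1%:R) * lam R m a s
  = lam R m.+1 a.+1 s.
Proof.
move=> le_am; rewrite lam_pred_scaled lam_compl_scaled // lamE -sumrN -big_split /=.
rewrite -(sum_binomial_shift _ _ (fun t => (-2) ^+ t * falling_ratio m.+1 s t)).
apply: eq_bigr => t _.
by rewrite -mulNrn -mulrnDl exprS; congr (_ *+ _); ring.
Qed.
End FallingRatio.

Lemma cast_unsplitP {m n p : nat} (E : (m + n)%N = p) (i : 'I_p) :
  exists u : 'I_m + 'I_n, i = cast_ord E (unsplit u).
Proof. by exists (split (cast_ord (esym E) i)); rewrite splitK cast_ordKV. Qed.

Lemma avecS_lshift (b : nat) (k : 'I_(2 ^ b)) :
  avec b.+1 0 (cast_ord (expS2 b) (lshift _ k)) = avec b 0 k.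
Proof. by rewrite /= castmxE cast_ordK !cast_ord_id row_mxEl. Qed.

Lemma avecS_rshift (b : nat) (k : 'I_(2 ^ b)) :
  avec b.+1 0 (cast_ord (expS2 b) (rshift _ k)) = (avec b 0%R k).+1.
Proof. by rewrite /= castmxE cast_ordK !cast_ord_id row_mxEr mxE. Qed.

Lemma avec_le {b : nat} (k : 'I_(2 ^ b)) : (avec b 0%R k <= b)%N.
Proof.
elim: b k => [|b IH] i; first by rewrite mxE.
have [[] k -> /=] := cast_unsplitP (expS2 b) i.
- by rewrite avecS_lshift leqW.
- by rewrite avecS_rshift ltnS.
Qed.

Lemma row_avecS {T : Type} (f : nat -> T) (b : nat) :
  castmx (erefl 1%N, expS2 b)
    (row_mx (\row_(k < 2 ^ b) f (avec b 0 k)) (\row_(k < 2 ^ b) f (avec b 0%R k).+1))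
  = \row_(k < 2 ^ b.+1) f (avec b.+1 0 k).
Proof.
apply/matrixP => i j; rewrite ord1.
have [[] k -> /=] := cast_unsplitP (expS2 b) j;
  rewrite castmxE cast_ordK !cast_ord_id mxE.
- by rewrite row_mxEl mxE avecS_lshift.
- by rewrite row_mxEr mxE avecS_rshift.
Qed.

Lemma castmx_diag (V : nmodType) m n (E : m = n) (d : 'rV[V]_m) :
  castmx (E, E) (diag_mx d) = diag_mx (castmx (erefl 1%N, E) d).
Proof. by case: n / E; rewrite !castmx_id. Qed.

Section Gamma.
Variable R : realFieldType.

Lemma kron2_diag m (c : 'rV[R]_2) (d : 'rV[R]_m) :
  kron2 (diag_mx c) (diag_mx d) = diag_mx (row_mx (c 0 0 *: d) (c 0 1 *: d)).
Proof. by rewrite /kron2 diag_mx_row !mxE /= !linearZ /= !scale0r. Qed.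

Lemma Gam_diagS {n b s : nat} {d0 d1 : 'rV[R]_(2 ^ b)} :
  Gam R n b s.-1 = diag_mx d0 -> Gam R n b s = diag_mx d1 ->
  let p := s%:R / n.+1%:R in
  Gam R n.+1 b.+1 s = castmx (expS2 b, expS2 b)
    (diag_mx (row_mx (p *: d0 + (1 - p) *: d1) (- (p *: d0) + (1 - p) *: d1))).
Proof.
move=> Gam_d0 Gam_d1 p; rewrite /= Gam_d0 Gam_d1 -diag_const_mx /Gam2 !kron2_diag.
rewrite -!linearZ -raddfD /= !scale_row_mx add_row_mx !mxE /=.
by rewrite !scale1r scaleN1r scalerN.
Qed.

Lemma lam0 n s : lam R n 0 s = 1.
Proof. by rewrite /lam big_ord1 expr0 !mulr1 divr1. Qed.

Lemma Gam_diag n b s : (b <= n)%N ->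
  Gam R n b s = diag_mx (\row_(k < 2 ^ b) lam R n (avec b 0 k) s).
Proof.
elim: b n s => [n s _ | b IH [//|n] s le_bn].
  by rewrite /= -diag_const_mx; congr diag_mx; apply/rowP => k; rewrite !mxE lam0.
have le_avec_n k : (avec b 0%R k <= n)%N by rewrite (leq_trans (avec_le k)).
rewrite (Gam_diagS (IH n s.-1 le_bn) (IH n s le_bn)) castmx_diag
  -(row_avecS (fun a => lam R n.+1 a s)).
congr (diag_mx (castmx _ (row_mx _ _))); apply/rowP => k; rewrite !mxE.
- by rewrite lam_mix ?le_avec_n.
- by rewrite lam_mix_succ ?le_avec_n.
Qed.
End Gamma.

Theorem lemma4p1 (R : realFieldType) (n b s : nat) :
  (b <= n)%N -> (s <= n)%N ->
  Gam R n b s = diag_mx (\row_(k < 2 ^ b) lam R n (avec b 0 k) s)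
  /\ (forall b' : nat, b = b'.+1 ->
      Gam R n b'.+1 s =
        castmx (expS2 b', expS2 b')
          (diag_mx (row_mx (\row_(k < 2 ^ b') lam R n (avec b' 0 k) s) 0)
           + diag_mx (row_mx 0 (\row_(k < 2 ^ b') lam R n (avec b' 0 k).+1 s)))).
Proof.
move=> le_bn _; split=> [|b' Eb]; first exact: Gam_diag.
rewrite Gam_diag -?Eb // -raddfD /= add_row_mx addr0 add0r castmx_diag.
by rewrite (row_avecS (fun a => lam R n a s)).
Qed.
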